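(* Consider an inter-class orthogonal main effect plan on $n$ runs whose factors are partitioned into $k$ classes, the $i$-th class consisting of factors $F_{i,1},\dots,F_{i,m_i}$, with every level of every factor occurring. Fix a class $i$ and $j\in\{1,\dots,m_i\}$. Then: (a) $X_{i,j}'(I-P_{\mathrm{all}\setminus(i,j)})X_{i,j}=X_{i,j}'(I-P^i_{\bar j})X_{i,j}$ and $X_{i,j}'(I-P_{\mathrm{all}\setminus(i,j)})Y=X_{i,j}'(I-P^i_{\bar j})Y$; that is, the reduced normal equation for $\alpha^{ij}$ (after eliminating all other factors and the general mean) coincides with $C^i_{j;\bar j}\widehat{\alpha^{ij}}=Q^i_{j;\bar j}$, where $C^i_{j;\bar j}=X_{i,j}'(I-P^i_{\bar j})X_{i,j}$ and $Q^i_{j;\bar j}=X_{i,j}'(I-P^i_{\bar j})Y$, obtained by eliminating only the other factors of class $i$ and the general mean. (b) $SS_{(i,j);\mathrm{all}}=SS^i_{j;\mathrm{all}}$ and $SS_{(i,j);\mathrm{all}>}=SS^i_{j;\mathrm{all}>}$. (c) $SS_E=SS_{tot}-\sum_{i=1}^kSS^i_{total}$, where $SS^i_{total}=\sum_{j=1}^{m_i}SS^i_{j;\mathrm{all}>}$.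
   Context: Model: $Y=\mathbf 1_n\mu+\sum_{i,j}X_{i,j}\alpha^{ij}+\epsilon$ with uncorrelated homoscedastic errors, where $X_{i,j}$ is the 0-1 design matrix of $F_{i,j}$ ($(u,t)$ entry $1$ iff $F_{i,j}$ is at level $t$ in run $u$). Two factors $A,B$ are orthogonal if $n_{AB}(s,t)=r_A(s)r_B(t)/n$ for all levels $s,t$ (incidence counts and replications); the plan is inter-class orthogonal if any two factors in different classes are orthogonal. $P_M$ denotes the orthogonal projector onto the column space of the matrix $M$. For a set $\mathcal S$ of factors, $P_{\mathcal S}$ is the projector onto the column space of $[\mathbf 1_n, X_F : F\in\mathcal S]$ (the general mean is always included). For a factor $F$ with design matrix $X_F$ not in $\mathcal S$, the sum of squares of $F$ adjusted for $\mathcal S$ is $SS_{F;\mathcal S}=Y'(I-P_{\mathcal S})X_F[X_F'(I-P_{\mathcal S})X_F]^-X_F'(I-P_{\mathcal S})Y$. Notation: $P_{\mathrm{all}\setminus(i,j)}$ uses all factors other than $F_{i,j}$; $P^i_{\bar j}$ uses the factors $F_{i,l}$, $l\neq j$ (of class $i$ only). Order all factors lexicographically: $F_{1,1},\dots,F_{1,m_1},F_{2,1},\dots,F_{k,m_k}$. $SS_{(i,j);\mathrm{all}}$ = SS of $F_{i,j}$ adjusted for all other factors; $SS_{(i,j);\mathrm{all}>}$ = SS of $F_{i,j}$ adjusted for all factors after it in this global order; $SS^i_{j;\mathrm{all}}$ = SS of $F_{i,j}$ adjusted for $F_{i,l}$, $l\neq j$; $SS^i_{j;\mathrm{all}>}$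 = SS of $F_{i,j}$ adjusted for $F_{i,j+1},\dots,F_{i,m_i}$ (for $j=m_i$, adjusted for the general mean only). $SS_{tot}=\sum_uY_u^2-(\sum_uY_u)^2/n$; $SS_E$ is the residual sum of squares of the full model. *)

From HB Require Import structures.
From mathcomp Require Import all_boot all_order all_algebra.
Set Implicit Arguments. Unset Strict Implicit. Unset Printing Implicit Defensive.
Import Order.TTheory GRing.Theory Num.Theory.
Local Open Scope ring_scope.

(* Factor index type: factor F_{i,j} is the pair (i, j), i : 'I_k a class,
   j : 'I_(m i) a factor of that class. *)
Definition factor (k : nat) (m : 'I_k -> nat) : finType := {i : 'I_k & 'I_(m i)}.

Definition design (R : nzRingType) (n sF : nat) (lev : 'I_n -> 'I_sF)
  : 'M[R]_(n, sF) := \matrix_(u, t) (lev u == t)%:R.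

Definition repl (n sA : nat) (levA : 'I_n -> 'I_sA) (a : 'I_sA) : nat :=
  #|[set u : 'I_n | levA u == a]|.
Definition incid (n sA sB : nat) (levA : 'I_n -> 'I_sA) (levB : 'I_n -> 'I_sB)
  (a : 'I_sA) (b : 'I_sB) : nat :=
  #|[set u : 'I_n | (levA u == a) && (levB u == b)]|.

Definition orth_factors (n sA sB : nat) (levA : 'I_n -> 'I_sA)
  (levB : 'I_n -> 'I_sB) : Prop :=
  forall a b, (incid levA levB a b)%:R = (repl levA a)%:R * (repl levB b)%:R / n%:R :> rat.

(* Orthogonal projector onto the column space of M: M (M'M)^- M', with the
   generalized inverse pinvmx (which satisfies A A^- A = A). *)
Definition projM (R : fieldType) (n p : nat) (M : 'M[R]_(n, p)) : 'M[R]_n :=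
  M *m pinvmx (M^T *m M) *m M^T.

(* A matrix whose ROW space is the span of 1_n and the columns of X_F, F in S;
   its transpose therefore has column space = col space of [1_n, X_F : F in S]. *)
Definition span_set (R : fieldType) (I : finType) (n : nat) (s : I -> nat)
  (lev : forall F : I, 'I_n -> 'I_(s F)) (S : pred I) : 'M[R]_n :=
  (<<const_mx 1 : 'M[R]_(1, n)>> + \sum_(F | S F) <<(design R (lev F))^T>>)%MS.

Definition projS (R : fieldType) (I : finType) (n : nat) (s : I -> nat)
  (lev : forall F : I, 'I_n -> 'I_(s F)) (S : pred I) : 'M[R]_n :=
  projM (span_set R lev S)^T.

Definition SSadj (R : fieldType) (n p : nat) (X : 'M[R]_(n, p)) (P : 'M[R]_n)
  (Y : 'cV[R]_n) : R :=
  let Q := 1%:M - P in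
  (Y^T *m Q *m X *m pinvmx (X^T *m Q *m X) *m X^T *m Q *m Y) 0 0.

Definition SSfac (R : fieldType) (I : finType) (n : nat) (s : I -> nat)
  (lev : forall F : I, 'I_n -> 'I_(s F)) (F : I) (S : pred I) (Y : 'cV[R]_n) : R :=
  SSadj (design R (lev F)) (projS R lev S) Y.

Definition all_but (k : nat) (m : 'I_k -> nat) (F : factor m) : pred (factor m) :=
  fun G => G != F.
Definition class_but (k : nat) (m : 'I_k -> nat) (F : factor m) : pred (factor m) :=
  fun G => (tag G == tag F) && (G != F).
Definition all_after (k : nat) (m : 'I_k -> nat) (F : factor m) : pred (factor m) :=
  fun G => (tag F < tag G)%N ||
           ((tag F == tag G) && (nat_of_ord (tagged F) < nat_of_ord (tagged G))%N).
Definition class_after (k : nat) (m : 'I_k -> nat) (F : factor m) : pred (factor m) :=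
  fun G => (tag G == tag F) &&
           (nat_of_ord (tagged F) < nat_of_ord (tagged G))%N.

(* Each adjusted sum of squares is a quadratic form in the orthogonal projector
   P_S onto the span of 1 and the designs of S, and adding a factor F to S adds
   to P_S the projector onto the residual (I - P_S) X_F. Split every design as
   X_G' = K_G + r_G 1' with K_G centred: inter-class orthogonality of G and H
   says exactly K_G X_H = 0, and K_G 1 = 0. Hence factors of other classes never
   change the residual of X_F, which gives (a) and (b), and
   P_all = P_0 + sum_i (P_(class i) - P_0), which telescopes inside each class
   into (c). *)

From HB Require Import structures.
From mathcomp Require Import all_boot all_order all_algebra.
Import Order.TTheory GRing.Theory Num.Theory.
Local Open Scope ring_scope.
Set Implicit Arguments. Unset Strict Implicit.

Section LinearModel.
Variable R : realFieldType.

Lemma trmx_mul_self_eq0 p q (M : 'M[R]_(p, q)) : M^T *m M = 0 -> M = 0.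
Proof.
move=> MM0; apply/matrixP=> u j; rewrite mxE; apply/eqP; rewrite -sqrf_eq0.
have := congr1 (fun A : 'M[R]_q => A j j) MM0.
rewrite !mxE (eq_bigr (fun v => M v j ^+ 2)) => [|v _]; last by rewrite mxE.
by move/psumr_eq0P => -> //= v _; apply: sqr_ge0.
Qed.

Lemma row_space_orth_eq0 q p r (A : 'M[R]_(q, p)) (M : 'M[R]_(p, r)) :
  (M^T <= A)%MS -> A *m M = 0 -> M = 0.
Proof.
move=> /submxP[D MD] AM0; apply: trmx_mul_self_eq0.
by rewrite MD -mulmxA AM0 mulmx0.
Qed.

Lemma subrmx_sub q1 q2 p (A B : 'M[R]_(q1, p)) (C : 'M[R]_(q2, p)) :
  (A <= C)%MS -> (B <= C)%MS -> (A - B <= C)%MS.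
Proof. by move=> sAC sBC; rewrite addmx_sub // eqmx_opp. Qed.

Lemma mulmx1B_eq0 p q (A : 'M[R]_(p, q)) (P : 'M[R]_q) :
  (A *m (1%:M - P) == 0) = (A *m P == A).
Proof. by rewrite mulmxBr mulmx1 subr_eq0 eq_sym. Qed.

Lemma gram_ginvK p r (B : 'M[R]_(p, r)) (G : 'M[R]_r) :
  B^T *m B *m G *m (B^T *m B) = B^T *m B -> B^T *m (B *m G *m B^T) = B^T.
Proof.
rewrite mulmxA => BBG; apply/eqP; rewrite -subr_eq0; apply/eqP.
set E := _ - _; have EB0 : E *m B = 0 by rewrite mulmxBl !mulmxA BBG subrr.
have EtB : E^T = B *m (G^T *m (B^T *m B) - 1%:M).
  by rewrite mulmxBr mulmx1 raddfB /= !trmx_mul !trmxK !mulmxA.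
suff /(congr1 trmx) : E^T = 0 by rewrite trmxK trmx0.
by apply: trmx_mul_self_eq0; rewrite trmxK EtB mulmxA EB0 mul0mx.
Qed.

Lemma projM_spec p r (B : 'M[R]_(p, r)) :
  [/\ (projM B)^T = projM B, B^T *m projM B = B^T,
      (projM B <= B^T)%MS & projM B *m projM B = projM B].
Proof.
rewrite /projM; set G := pinvmx _.
have ginvG : B^T *m B *m G *m (B^T *m B) = B^T *m B by rewrite mulmxKpV.
clearbody G; have fixG : B^T *m (B *m G *m B^T) = B^T by apply: gram_ginvK.
have fixGt : B^T *m (B *m G^T *m B^T) = B^T.
  by apply: gram_ginvK; move: (congr1 trmx ginvG); rewrite !trmx_mul !trmxK !mulmxA.
have sym : (B *m G *m B^T)^T = B *m G *m B^T.
  have -> : (B *m G *m B^T)^T = B *m G^T *m B^T by rewrite !trmx_mul trmxK mulmxA.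
  apply/eqP; rewrite -subr_eq0; apply/eqP; apply: (row_space_orth_eq0 (A := B^T)).
    by rewrite raddfB /= subrmx_sub ?trmx_mul ?trmxK ?mulmxA ?submxMl.
  by rewrite mulmxBr fixGt fixG subrr.
split=> //; first by rewrite submxMl.
by rewrite -[LHS]mulmxA fixG.
Qed.

Lemma orth_factorsR n sA sB (levA : 'I_n -> 'I_sA) (levB : 'I_n -> 'I_sB) a b :
  orth_factors levA levB ->
  (incid levA levB a b)%:R = (repl levA a)%:R * (repl levB b)%:R / n%:R :> R.
Proof.
move=> /(_ a b); have [n0|n0] := eqVneq n 0%N.
  have nR (K : numFieldType) : n%:R = 0 :> K by rewrite n0.
  by rewrite !nR !invr0 !mulr0 => /eqP; rewrite pnatr_eq0 => /eqP->.
move=> /(congr1 (fun x => x * n%:R)); rewrite mulfVK ?pnatr_eq0 // -!natrM.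
by move=> /eqP; rewrite eqr_nat => /eqP <-; rewrite natrM mulfK ?pnatr_eq0.
Qed.

Lemma sum_indicator_card (T : finType) (A : pred T) :
  \sum_u ((A u)%:R : R) = #|[set u | A u]|%:R.
Proof.
rewrite -sum1_card natr_sum [RHS]big_mkcond; apply: eq_bigr => u _.
by rewrite inE; case: (A u).
Qed.

Section Span.
Variables (I : finType) (n : nat) (s : I -> nat).
Variable lev : forall F : I, 'I_n -> 'I_(s F).
Local Notation X F := (design R (lev F)).
Local Notation J := (const_mx 1 : 'M[R]_(1, n)).
Local Notation span S := (span_set R lev S).
Local Notation P S := (projS R lev S).

Lemma span_set_sub (S : pred I) q (B : 'M[R]_(q, n)) :
  (J <= B)%MS -> (forall G, S G -> ((X G)^T <= B)%MS) -> (span S <= B)%MS.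
Proof.
move=> sJB sXB; rewrite /span_set addsmx_sub genmxE sJB /=.
by apply/sumsmx_subP => G SG; rewrite genmxE sXB.
Qed.

Lemma const_sub_span (S : pred I) : (J <= span S)%MS.
Proof. by rewrite /span_set (submx_trans _ (addsmxSl _ _)) // genmxE. Qed.

Lemma design_sub_span (S : pred I) G : S G -> ((X G)^T <= span S)%MS.
Proof.
move=> SG; rewrite /span_set (submx_trans _ (addsmxSr _ _)) //.
by apply: (sumsmx_sup G) => //; rewrite genmxE.
Qed.

Lemma span_set_mono (S T : pred I) : subpred T S -> (span T <= span S)%MS.
Proof.
move=> sTS; apply: span_set_sub => [|G /sTS]; first exact: const_sub_span.
exact: design_sub_span.
Qed.

Lemma span_set_mul_eq0 (S : pred I) p (M : 'M[R]_(n, p)) :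
  span S *m M = 0 <-> J *m M = 0 /\ forall G, S G -> (X G)^T *m M = 0.
Proof.
split=> [/sub_kermxP sSker | [/sub_kermxP sJker sXker]].
  split=> [|G SG]; apply/sub_kermxP; apply: submx_trans sSker.
    exact: const_sub_span.
  exact: design_sub_span.
apply/sub_kermxP; apply: span_set_sub => // G SG.
by apply/sub_kermxP; apply: sXker.
Qed.

Lemma projS_spec (S : pred I) :
  [/\ (P S)^T = P S, span S *m P S = span S, (P S <= span S)%MS & P S *m P S = P S].
Proof. by have [] := projM_spec (span S)^T; rewrite trmxK. Qed.

Lemma projS_unique (S : pred I) Q :
  (Q^T <= span S)%MS -> span S *m Q = span S -> P S = Q.
Proof.
have [Psym spanP sPspan _] := projS_spec S.
move=> sQspan spanQ; apply/eqP; rewrite -subr_eq0; apply/eqP.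
apply: (row_space_orth_eq0 (A := span S)); last by rewrite mulmxBr spanP spanQ subrr.
by rewrite raddfB /= Psym subrmx_sub.
Qed.

Lemma projS_mul_eq0 (S : pred I) p (M : 'M[R]_(n, p)) :
  span S *m M = 0 -> P S *m M = 0.
Proof.
have [_ _ /submxP[D ->] _] := projS_spec S.
by move=> spanM0; rewrite -mulmxA spanM0 mulmx0.
Qed.

Lemma span_projS_resid (S : pred I) : span S *m (1%:M - P S) = 0.
Proof. by have [_ spanP _ _] := projS_spec S; apply/eqP; rewrite mulmx1B_eq0 spanP. Qed.

Lemma const_projS_resid (S : pred I) : J *m (1%:M - P S) = 0.
Proof. by have [] := (span_set_mul_eq0 S _).1 (span_projS_resid S). Qed.

Lemma design_projS_resid (S : pred I) G : S G -> (X G)^T *m (1%:M - P S) = 0.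
Proof. by have [_] := (span_set_mul_eq0 S _).1 (span_projS_resid S); apply. Qed.

Lemma const_projS (S : pred I) : J *m P S = J.
Proof. by apply/eqP; rewrite -mulmx1B_eq0 const_projS_resid. Qed.

Lemma design_projS (S : pred I) G : S G -> (X G)^T *m P S = (X G)^T.
Proof. by move=> SG; apply/eqP; rewrite -mulmx1B_eq0 design_projS_resid. Qed.

Lemma resid_projS_tr (S : pred I) : (1%:M - P S)^T = 1%:M - P S.
Proof. by have [Psym _ _ _] := projS_spec S; rewrite raddfB /= trmx1 Psym. Qed.

Lemma resid_projS_idem (S : pred I) : (1%:M - P S) *m (1%:M - P S) = 1%:M - P S.
Proof.
have [_ _ _ PP] := projS_spec S.
by rewrite mulmxBr mulmx1 mulmxBl mul1mx PP subrr subr0.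
Qed.

Lemma SSfac_projM F (S : pred I) Y :
  SSfac lev F S Y = (Y^T *m projM ((1%:M - P S) *m X F) *m Y) 0 0.
Proof.
rewrite /SSfac /SSadj /projM /= trmx_mul resid_projS_tr.
set Q := 1%:M - P S; have QQ : Q *m Q = Q := resid_projS_idem S.
by rewrite [_ *m (Q *m _)]mulmxA -[_ *m Q *m Q]mulmxA QQ !mulmxA.
Qed.

Lemma projS_add (T U : pred I) F : (forall G, U G = T G || (G == F)) ->
  P U = P T + projM ((1%:M - P T) *m X F).
Proof.
move=> defU; set Q := 1%:M - P T; set M := Q *m X F.
have QQ : Q *m Q = Q := resid_projS_idem T.
have [PTsym _ sPTspan _] := projS_spec T.
have [PMsym MtPM sPMMt _] := projM_spec M.
have Mt : M^T = (X F)^T *m Q by rewrite trmx_mul resid_projS_tr.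
have QPM : Q *m projM M = projM M.
  by rewrite /projM /M !mulmxA QQ.
have sTU : (span T <= span U)%MS by apply: span_set_mono => G TG; rewrite defU TG.
have XU : ((X F)^T <= span U)%MS by apply: design_sub_span; rewrite defU eqxx orbT.
apply: projS_unique.
  rewrite raddfD /= PTsym PMsym addmx_sub ?(submx_trans sPTspan) //.
  apply: submx_trans sPMMt _; rewrite Mt /Q mulmxBr mulmx1 subrmx_sub //.
  by rewrite (submx_trans (submxMl _ _)) ?(submx_trans sPTspan).
apply/eqP; rewrite -mulmx1B_eq0 opprD addrA -/Q; apply/eqP.
apply/span_set_mul_eq0; split=> [|G].
  by rewrite mulmxBr -QPM !mulmxA const_projS_resid !mul0mx subrr.
rewrite defU => /orP[TG | /eqP->].
  by rewrite mulmxBr -QPM !mulmxA design_projS_resid // !mul0mx subrr.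
by rewrite mulmxBr -QPM mulmxA -Mt MtPM Mt subrr.
Qed.

Lemma eq_projS (S T : pred I) : S =1 T -> P S = P T.
Proof. by move=> eqST; rewrite /projS /span_set (eq_bigl _ _ eqST). Qed.

Lemma projS_pred0 : P xpred0 = n%:R^-1 *: (J^T *m J).
Proof.
apply: projS_unique.
  rewrite linearZ /= trmx_mul trmxK scalemx_sub //.
  exact: submx_trans (submxMl _ _) (const_sub_span _).
apply/eqP; rewrite -mulmx1B_eq0; apply/eqP.
apply/span_set_mul_eq0; split=> // .
have [n0|n0] := eqVneq n 0%N.
  by apply/matrixP=> i j; rewrite !mxE big1 // => u; have := ltn_ord u; rewrite {2}n0.
have JJt : J *m J^T = n%:R%:M.
  apply/matrixP=> i j; rewrite !ord1 !mxE (eq_bigr (fun _ => 1)) => [|u _].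
    by rewrite sumr_const card_ord.
  by rewrite !mxE mulr1.
rewrite mulmxBr mulmx1 -scalemxAr mulmxA JJt mul_scalar_mx scalerA mulVf ?pnatr_eq0 //.
by rewrite scale1r subrr.
Qed.

Lemma SStot_projS_pred0 (Y : 'cV[R]_n) :
  (Y^T *m (1%:M - P xpred0) *m Y) 0 0
    = \sum_(u < n) Y u 0 ^+ 2 - (\sum_(u < n) Y u 0) ^+ 2 / n%:R.
Proof.
rewrite projS_pred0 mulmxBr mulmx1 mulmxBl [LHS]mxE [Z in _ + Z]mxE; congr (_ - _).
  by rewrite mxE; apply: eq_bigr => u _; rewrite mxE expr2.
rewrite -scalemxAr -scalemxAl mxE mulrC; congr (_ * _).
have -> : Y^T *m (J^T *m J) *m Y = (J *m Y)^T *m (J *m Y) by rewrite trmx_mul !mulmxA.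
rewrite mxE big_ord1 !mxE expr2.
by congr (_ * _); apply: eq_bigr => u _; rewrite !mxE mul1r.
Qed.

End Span.

Section Factors.
Variables (n k : nat) (m : 'I_k -> nat) (s : factor m -> nat).
Variable lev : forall F : factor m, 'I_n -> 'I_(s F).
Hypothesis interclass :
  forall F G : factor m, tag F != tag G -> orth_factors (lev F) (lev G).
Local Notation X F := (design R (lev F)).
Local Notation J := (const_mx 1 : 'M[R]_(1, n)).
Local Notation span S := (span_set R lev S).
Local Notation P S := (projS R lev S).

Definition level_freq G : 'cV[R]_(s G) := \col_b ((repl (lev G) b)%:R / n%:R).

Definition centred_design G : 'M[R]_(s G, n) :=
  \matrix_(b, u) ((lev G u == b)%:R - (repl (lev G) b)%:R / n%:R).

Lemma design_centred G : (X G)^T = centred_design G + level_freq G *m J.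
Proof. by apply/matrixP => b u; rewrite !mxE big_ord1 !mxE mulr1 subrK. Qed.

Lemma centred_design_orth G H : tag G != tag H -> centred_design G *m X H = 0.
Proof.
move=> GH; apply/matrixP => b t; rewrite !mxE.
under eq_bigr => u _ do rewrite !mxE mulrBl -natrM mulnb.
rewrite sumrB -mulr_sumr !sum_indicator_card (orth_factorsR _ _ (interclass GH)).
by rewrite mulrAC subrr.
Qed.

Lemma centred_design_const G : centred_design G *m J^T = 0.
Proof.
apply/matrixP => b t; rewrite !mxE.
under eq_bigr => u _ do rewrite !mxE mulr1.
rewrite sumrB sum_indicator_card sumr_const card_ord -[_ *+ n]mulr_natl.
have [n0|n0] := eqVneq n 0%N; last by rewrite mulrCA mulfV ?pnatr_eq0 // mulr1 subrr.
have nR : n%:R = 0 :> R by rewrite n0.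
move: (max_card [set u | lev G u == b]); rewrite card_ord => /leq_trans/(_ (eq_leq n0)).
by rewrite leqn0 nR mul0r subr0 => /eqP->.
Qed.

Lemma centred_design_projS G (S : pred (factor m)) :
  (forall H, S H -> tag H != tag G) -> centred_design G *m P S = 0.
Proof.
move=> Sother; have [Psym _ _ _] := projS_spec lev S.
rewrite -(trmxK (_ *m _)) trmx_mul Psym projS_mul_eq0 ?trmx0 //.
apply/span_set_mul_eq0; split=> [|H SH].
  by rewrite -[J]trmxK -trmx_mul centred_design_const trmx0.
by rewrite -trmx_mul centred_design_orth ?trmx0 // eq_sym Sother.
Qed.

Lemma design_projS_other G (S : pred (factor m)) :
  (forall H, S H -> tag H != tag G) -> (X G)^T *m P S = level_freq G *m J.
Proof.
move=> Sother.
by rewrite design_centred mulmxDl centred_design_projS // -mulmxA const_projS add0r.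
Qed.

Lemma design_resid_orth G F (S : pred (factor m)) :
  tag G != tag F -> (forall H, S H -> tag H == tag F) ->
  (X G)^T *m (1%:M - P S) *m X F = 0.
Proof.
move=> GF Sclass; rewrite design_centred !mulmxDl -(mulmxA _ J) const_projS_resid.
rewrite mulmx0 mul0mx addr0 mulmxBr mulmx1 mulmxBl centred_design_orth //.
by rewrite centred_design_projS ?mul0mx ?subrr // => H /Sclass /eqP->; rewrite eq_sym.
Qed.

(* Factors of other classes are orthogonal to the centred part of X_F, so
   adding them to the adjustment set does not change the residual of X_F. *)
Lemma resid_projS_design_eq F (S T : pred (factor m)) :
  subpred T S -> (forall H, T H -> tag H == tag F) ->
  (forall H, S H -> ~~ T H -> tag H != tag F) ->
  (1%:M - P S) *m X F = (1%:M - P T) *m X F.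
Proof.
move=> sTS Tclass Sother.
suff /eqP : (P S - P T) *m X F = 0 by rewrite mulmxBl subr_eq0 !mulmxBl => /eqP->.
have [PSsym spanPS sPSspan _] := projS_spec lev S.
have [PTsym _ sPTspan _] := projS_spec lev T.
apply: (row_space_orth_eq0 (A := span S)).
  rewrite trmx_mul raddfB /= PSsym PTsym (submx_trans (submxMl _ _)) //.
  by rewrite subrmx_sub // (submx_trans sPTspan) ?span_set_mono.
have -> : span S *m ((P S - P T) *m X F) = span S *m ((1%:M - P T) *m X F).
  by rewrite !mulmxA !mulmxBr spanPS mulmx1.
apply/span_set_mul_eq0; split=> [|H SH]; first by rewrite mulmxA const_projS_resid mul0mx.
have [TH|nTH] := boolP (T H); first by rewrite mulmxA design_projS_resid ?mul0mx.
by rewrite mulmxA design_resid_orth // Sother.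
Qed.

Definition class_from (i : 'I_k) (j : nat) : pred (factor m) :=
  fun G => (tag G == i) && (j <= tagged G)%N.

(* The spans of the centred designs of different classes are mutually orthogonal. *)
Lemma projS_predT_decomp :
  P predT = P xpred0 + \sum_(i < k) (P (class_from i 0) - P xpred0).
Proof.
have sym S : (P S)^T = P S by have [] := projS_spec lev S.
have sub S : (P S <= span predT)%MS.
  by have [_ _ sPspan _] := projS_spec lev S; rewrite (submx_trans sPspan) ?span_set_mono.
have other i G : i != tag G -> forall H, class_from i 0 H -> tag H != tag G.
  by move=> iG H /andP[/eqP tH _]; rewrite tH.
apply: projS_unique.
  rewrite raddfD raddf_sum /= sym addmx_sub ?summx_sub // => i _.
  by rewrite raddfB /= !sym subrmx_sub.
apply/eqP; rewrite -mulmx1B_eq0; apply/eqP/span_set_mul_eq0; split=> [|G _].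
  rewrite mulmxBr mulmx1 mulmxDr const_projS mulmx_sumr big1 ?addr0 ?subrr // => i _.
  by rewrite mulmxBr !const_projS subrr.
rewrite mulmxBr mulmx1 mulmxDr mulmx_sumr (bigD1 (tag G)) //= big1 ?addr0 => [|i iG].
  rewrite mulmxBr (design_projS _ (_ : class_from (tag G) 0 G)) ?/class_from ?eqxx //.
  by rewrite [_ + (_ - _)]addrC subrK subrr.
by rewrite mulmxBr !design_projS_other ?subrr //; apply: other.
Qed.

Lemma SSfac_class_after i (j : 'I_(m i)) Y :
  let F : factor m := Tagged (fun i => 'I_(m i)) j in
  SSfac lev F (class_after F) Y
    = (Y^T *m (P (class_from i j) - P (class_from i j.+1)) *m Y) 0 0.
Proof.
move=> F; have defU G : class_from i j G = class_from i j.+1 G || (G == F).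
  case: G => i' j'; rewrite /class_from /=; have [e|ne] := eqVneq i' i.
    subst i'; rewrite eq_Tagged /= leq_eqVlt orbC; congr (_ || _).
    by apply/eqP/eqP => [/val_inj|->].
  rewrite /=; apply/esym/negbTE; apply: contra ne => /eqP/(congr1 tag)/= ->.
  exact: eqxx.
by rewrite (projS_add _ defU) addrC addKr SSfac_projM.
Qed.

Lemma sum_SSfac_class i Y :
  \sum_(j < m i) SSfac lev (Tagged (fun i => 'I_(m i)) j)
                   (class_after (Tagged (fun i => 'I_(m i)) j)) Y
    = (Y^T *m (P (class_from i 0) - P xpred0) *m Y) 0 0.
Proof.
pose f j := (Y^T *m P (class_from i j) *m Y) 0 0.
have -> : P xpred0 = P (class_from i (m i)).
  apply: eq_projS => -[i' j']; rewrite /class_from /=.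
  by case: eqP => // e; subst i'; rewrite leqNgt ltn_ord.
rewrite mulmxBr mulmxBl mxE [Z in _ + Z]mxE -/(f 0%N) -/(f (m i)).
rewrite -[RHS]opprB -(telescope_sumr f (leq0n _)) big_mkord -sumrN.
by apply: eq_bigr => j _; rewrite SSfac_class_after mulmxBr mulmxBl mxE [Z in _ + Z]mxE opprB.
Qed.

End Factors.
End LinearModel.

Theorem theorem4p6 (R : realFieldType) (n k : nat) (m : 'I_k -> nat)
  (s : factor m -> nat) (lev : forall F : factor m, 'I_n -> 'I_(s F))
  (all_levels : forall (F : factor m) (t : 'I_(s F)), exists u, lev F u = t)
  (interclass : forall F G : factor m, tag F != tag G -> orth_factors (lev F) (lev G))
  (Y : 'cV[R]_n) :
  (forall (i : 'I_k) (j : 'I_(m i)),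
     let F : factor m := Tagged (fun i => 'I_(m i)) j in
     let X := design R (lev F) in
     (* (a) *)
     (X^T *m (1%:M - projS R lev (all_but F)) *m X
        = X^T *m (1%:M - projS R lev (class_but F)) *m X
      /\ X^T *m (1%:M - projS R lev (all_but F)) *m Y
        = X^T *m (1%:M - projS R lev (class_but F)) *m Y)
     (* (b) *)
     /\ SSfac lev F (all_but F) Y = SSfac lev F (class_but F) Y
     /\ SSfac lev F (all_after F) Y = SSfac lev F (class_after F) Y)
  /\
  (* (c) *)
  (Y^T *m (1%:M - projS R lev predT) *m Y) 0 0
    = (\sum_(u < n) Y u 0 ^+ 2 - (\sum_(u < n) Y u 0) ^+ 2 / n%:R)
      - \sum_(i < k) \sum_(j < m i)
          SSfac lev (Tagged (fun i => 'I_(m i)) j)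
                (class_after (Tagged (fun i => 'I_(m i)) j)) Y.
Proof.
split=> [i j F X|].
  have trX S : X^T *m (1%:M - projS R lev S) = ((1%:M - projS R lev S) *m X)^T.
    by rewrite trmx_mul resid_projS_tr.
  have residX_but : (1%:M - projS R lev (all_but F)) *m X
                    = (1%:M - projS R lev (class_but F)) *m X.
    apply: (resid_projS_design_eq _ interclass) => [H /andP[] // | H /andP[] // |].
    by rewrite /all_but /class_but => H -> /=; rewrite andbT.
  have residX_after : (1%:M - projS R lev (all_after F)) *m X
                      = (1%:M - projS R lev (class_after F)) *m X.
    apply: (resid_projS_design_eq _ interclass) => [H /andP[e lt] | H /andP[] // |].
      by rewrite /all_after eq_sym e lt orbT.
    move=> H /orP[lt _ | /andP[e lt]]; last by rewrite /class_after eq_sym e lt.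
    by apply: contraTneq lt => ->; rewrite ltnn.
  by rewrite !SSfac_projM !trX residX_but residX_after.
rewrite (projS_predT_decomp _ interclass) -(SStot_projS_pred0 lev Y) opprD addrA.
rewrite mulmxBr mulmxBl [LHS]mxE [Z in _ + Z]mxE mulmx_sumr mulmx_suml summxE.
by congr (_ - _); apply: eq_bigr => i _; rewrite sum_SSfac_class.
Qed.
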